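(* Let $D^*:\mathcal{A}\to\mathcal{A}$ be defined by $D^*v=\mathrm{Res}_w\, w^{-2}(\mathrm{Id}\otimes c)Y(w)v$ (the coefficient of $w^1$ in $(\mathrm{Id}\otimes c)Y(w)v\in\mathcal{A}[w]$). Then $D^*$ is a derivation of $\mathcal{A}$ with $D^*(t_{a,b})=b\,t_{a,b-1}$ for all $a,b\ge0$ (in particular $D^*(t_{0,n})=n\,t_{0,n-1}$, $D^*(t_{2,0})=0$), and the identity $$\frac{d}{dw}Y(w)=Y(w)D^*-(\mathrm{Id}\otimes D^* )Y(w)$$ holds as maps $\mathcal{A}\to(\mathcal{A}\otimes\mathcal{A})(\!(w^{-1})\!)$.
   Context: Fix $\epsilon_1+\epsilon_2+\epsilon_3=0$, $\sigma_2=\epsilon_1^2+\epsilon_1\epsilon_2+\epsilon_2^2$, $\sigma_3=\epsilon_1\epsilon_2\epsilon_3$. $\mathcal{A}=U_{\epsilon_1}(\mathfrak{gl}_1\otimes\mathrm{Diff}_{\epsilon_2}(\mathbb{C}))$ is the associative algebra with elements $t_{m,n}$ ($m,n\ge0$) satisfying $[t_{0,0},t_{c,d}]=0$, $[t_{1,0},t_{c,d}]=d\,t_{c,d-1}$, $[t_{0,1},t_{c,d}]=-c\,t_{c-1,d}$, $[t_{2,0},t_{c,d}]=2d\,t_{c+1,d-1}$, $[t_{1,1},t_{c,d}]=(d-c)t_{c,d}$, $[t_{0,2},t_{c,d}]=-2c\,t_{c-1,d+1}$, and $[t_{3,0},t_{c,d}]=3d\,t_{c+2,d-1}+\sigma_2\frac{d(d-1)(d-2)}{4}t_{c,d-3}+\frac{3}{2}\sigma_3\sum_{m=0}^{d-3}\sum_{n=0}^{c}\frac{\binom{m+n+1}{n+1}(n+1)\binom{d-m+c-n-2}{c-n+1}(c-n+1)}{\binom{d+c}{c}}t_{n,m}t_{c-n,d-3-m}$;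 it is generated by $t_{2,0}$ and $t_{0,n}$, $n\ge0$. $Y(w)=\Delta_{\mathcal{A}}:\mathcal{A}\to(\mathcal{A}\otimes\mathcal{A})(\!(w^{-1})\!)$ is the algebra homomorphism with $Y(w)t_{0,n}=1\otimes t_{0,n}+\sum_{m=0}^n\binom{n}{m}w^{n-m}t_{0,m}\otimes1$ and $Y(w)t_{2,0}=1\otimes t_{2,0}+t_{2,0}\otimes1+2\sigma_3\sum_{m,n\ge0}\frac{(m+n+1)!}{m!n!}(-1)^nw^{-n-m-2}t_{0,n}\otimes t_{0,m}$. $c:\mathcal{A}\to\mathbb{C}$ is the augmentation algebra homomorphism with $c(1)=1$, $c(t_{a,b})=0$. *)

From HB Require Import structures.
From mathcomp Require Import all_boot all_order all_algebra.
From mathcomp Require Export reals complex.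
Set Implicit Arguments. Unset Strict Implicit. Unset Printing Implicit Defensive.
Import Order.TTheory GRing.Theory Num.Theory.
Local Open Scope ring_scope.

Definition islin (C : pzRingType) (U V : lmodType C) (f : U -> V) : Prop :=
  forall (a : C) (u v : U), f (a *: u + v) = a *: f u + f v.

Definition isbilin (C : pzRingType) (U W V : lmodType C) (f : U -> W -> V) : Prop :=
  (forall u, islin (f u)) /\ (forall w, islin (fun u => f u w)).

(* [tens : A -> A -> T] exhibits T as the tensor product A (x)_C A
   (universal property for bilinear maps: existence and uniqueness). *)
Definition is_tensor (C : pzRingType) (A T : lmodType C) (tens : A -> A -> T) : Prop :=
  [/\ isbilin tens,
      (forall (V : lmodType C) (f : A -> A -> V), isbilin f ->
         exists g : T -> V, islin g /\ forall a b, g (tens a b) = f a b) &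
      (forall (V : lmodType C) (g1 g2 : T -> V), islin g1 -> islin g2 ->
         (forall a b, g1 (tens a b) = g2 (tens a b)) -> forall x, g1 x = g2 x)].

Definition comm (R : pzRingType) (x y : R) : R := x * y - y * x.

Inductive gen_by (C : pzRingType) (A : algType C) (t : nat -> nat -> A) : A -> Prop :=
| gen_t20 : gen_by t (t 2%N 0%N)
| gen_t0n n : gen_by t (t 0%N n)
| gen_one : gen_by t 1
| gen_scale (a : C) x : gen_by t x -> gen_by t (a *: x)
| gen_add x y : gen_by t x -> gen_by t y -> gen_by t (x + y)
| gen_mul x y : gen_by t x -> gen_by t y -> gen_by t (x * y).

(* The defining commutation relations of U_{eps1}(gl_1 (x) Diff_{eps2}(C)),
   with s2 = sigma_2, s3 = sigma_3. *)
Definition UDiff_rels (C : fieldType) (A : algType C) (s2 s3 : C)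
  (t : nat -> nat -> A) : Prop :=
  forall c d : nat,
  [/\ comm (t 0 0)%N (t c d) = 0,
      comm (t 1 0)%N (t c d) = d%:R *: t c d.-1,
      comm (t 0 1)%N (t c d) = - (c%:R *: t c.-1 d) &
      comm (t 2 0)%N (t c d) = (2 * d)%:R *: t c.+1 d.-1] /\
  [/\ comm (t 1 1)%N (t c d) = (d%:R - c%:R) *: t c d,
      comm (t 0 2)%N (t c d) = - ((2 * c)%:R *: t c.-1 d.+1) &
      comm (t 3 0)%N (t c d) =
        (3 * d)%:R *: t c.+2 d.-1
        + (s2 * (d * (d - 1) * (d - 2))%:R / 4%:R) *: t c (d - 3)%N
        + (3%:R / 2%:R * s3) *:
            \sum_(m < d - 2) \sum_(n < c.+1)
              (('C(m + n + 1, n + 1) * (n + 1) * 'C(d - m + c - n - 2, c - n + 1)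
                 * (c - n + 1))%:R / ('C(d + c, c))%:R)
              *: (t n m * t (c - n)%N (d - 3 - m)%N)].

(* Laurent series in w^{-1} with coefficients in T are coefficient functions
   f : int -> T (f k = coefficient of w^k) that vanish above some bound. *)
Definition lbounded (T : zmodType) (f : int -> T) (N : int) : Prop :=
  forall k : int, N < k -> f k = 0.

(* Coefficient of w^k in the product f g, given upper bounds N for f and M for g:
   sum over i + j = k with i <= N, j <= M. *)
Definition lmulB (T : pzRingType) (f g : int -> T) (N M k : int) : T :=
  let n := N + M - k in
  if 0 <= n then \sum_(a < (absz n).+1) f (N - (a : nat)%:Z) * g (M - (absz n - a)%:Z)
  else 0.

Definition laurent_alg_hom (C : pzRingType) (A : algType C) (T : algType C)
  (Y : A -> int -> T) : Prop :=
  [/\ forall x, exists N, lbounded (Y x) N,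
      forall (a : C) x y k, Y (a *: x + y) k = a *: Y x k + Y y k,
      forall k, Y 1 k = (if k == 0 then 1 else 0) &
      forall x y N M, lbounded (Y x) N -> lbounded (Y y) M ->
        forall k, Y (x * y) k = lmulB (Y x) (Y y) N M k].

Definition Dstar (C : pzRingType) (A : algType C) (T : algType C)
  (idc : T -> A) (Y : A -> int -> T) (v : A) : A := idc (Y v 1).

From HB Require Import structures.
From mathcomp Require Import all_boot all_order all_algebra.
From mathcomp Require Import reals complex.
From mathcomp Require Import ring zify.
Import Order.TTheory GRing.Theory Num.Theory.
Local Open Scope ring_scope.

Set Implicit Arguments. Unset Strict Implicit. Unset Printing Implicit Defensive.

(* The proof has three layers.
   - Algebra of A (x) A: maps on the tensor product are determined by pure
     tensors, so Id (x) c is an algebra morphism and Id (x) D is a derivation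
     whenever D is one.
   - Laurent products: the coefficient formula [lmulB] is compatible with ring
     morphisms, derivations and d/dw (Leibniz rule), and for series without
     negative powers its coefficients of w^0 and w^1 are the expected ones.
   - Closure under the algebra operations: the counit property "(Id (x) c) Y(w) x
     is a polynomial in w with constant term x" and the differential identity
     are preserved by sums, scalings and products, and Dstar is a derivation on
     elements with the counit property.  Both properties are then verified on
     the generators t_{2,0}, t_{0,n} from the explicit formulas for Y, and
     Dstar t_{a,b} = b t_{a,b-1} follows by induction on a from
     t_{a+1,b} = [t_{2,0}, t_{a,b+1}] / (2(b+1)). *)

Section LinearMaps.
Variables (C : pzRingType) (U V : lmodType C) (f : U -> V).
Hypothesis f_lin : islin f.

Lemma islin0 : f 0 = 0.
Proof.
have := f_lin 1 0 0; rewrite !scale1r addr0.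
by move/(congr1 (fun z => z - f 0)); rewrite /= subrr addrK.
Qed.

Lemma islinD u v : f (u + v) = f u + f v.
Proof. by have := f_lin 1 u v; rewrite !scale1r. Qed.

Lemma islinZ a u : f (a *: u) = a *: f u.
Proof. by have := f_lin a u 0; rewrite islin0 !addr0. Qed.

Lemma islinB u v : f (u - v) = f u - f v.
Proof. by rewrite islinD -scaleN1r islinZ scaleN1r. Qed.

Lemma islin_sum I (r : seq I) (P : pred I) (F : I -> U) :
  f (\sum_(i <- r | P i) F i) = \sum_(i <- r | P i) f (F i).
Proof. exact: (big_morph f islinD islin0). Qed.

Lemma islin_if (b : bool) u : f (if b then u else 0) = if b then f u else 0.
Proof. by case: b; rewrite ?islin0. Qed.

End LinearMaps.

Lemma derivation1 (R : pzRingType) (d : R -> R) :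
  (forall x y, d (x * y) = d x * y + x * d y) -> d 1 = 0.
Proof.
move=> hd; have := hd 1 1; rewrite !mulr1 mul1r.
by move/(congr1 (fun z => z - d 1)); rewrite /= subrr addrK.
Qed.

(* Maps out of A (x) A are determined by their values on pure tensors; this
   gives the multiplicativity of Id (x) c and the Leibniz rule for Id (x) D. *)
Section TensorProduct.
Variables (C : comPzRingType) (A T : algType C) (tens : A -> A -> T).
Hypothesis tens_univ : is_tensor tens.
Hypothesis tensM : forall a b a' b', tens a b * tens a' b' = tens (a * a') (b * b').

Lemma tens_linr a : islin (tens a).
Proof. by case: tens_univ => -[tens_lin _] _ _; apply: tens_lin. Qed.

Lemma tens_ext2 (V : lmodType C) (g1 g2 : T -> T -> V) :
  isbilin g1 -> isbilin g2 ->
  (forall a b a' b', g1 (tens a b) (tens a' b') = g2 (tens a b) (tens a' b')) ->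
  forall u v, g1 u v = g2 u v.
Proof.
case: tens_univ => _ _ uniq [g1r g1l] [g2r g2l] pure u v.
have on_pure_right a' b' w : g1 w (tens a' b') = g2 w (tens a' b').
  by apply: (uniq _ (fun w => g1 w _) (fun w => g2 w _)) => // a b; apply: pure.
by apply: (uniq _ (g1 u) (g2 u)) => // a b; apply: on_pure_right.
Qed.

Lemma idc_mul (c : A -> C) (idc : T -> A) :
  (forall x y, c (x * y) = c x * c y) ->
  islin idc -> (forall a b, idc (tens a b) = c b *: a) ->
  forall u v, idc (u * v) = idc u * idc v.
Proof.
move=> cM idc_lin idc_tens.
apply: (tens_ext2 (g1 := fun u v => idc (u * v))); first split.
- by move=> u a v w; rewrite mulrDr -scalerAr idc_lin.
- by move=> w a u v; rewrite mulrDl -scalerAl idc_lin.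
- split=> [u a v w | w a u v]; rewrite idc_lin.
    by rewrite mulrDr -scalerAr.
  by rewrite mulrDl -scalerAl.
move=> a b a' b'; rewrite tensM !idc_tens cM -scalerAl -scalerAr scalerA.
by rewrite mulrC.
Qed.

Lemma idD_mul (D : A -> A) (idD : T -> T) :
  (forall x y, D (x * y) = D x * y + x * D y) ->
  islin idD -> (forall a b, idD (tens a b) = tens a (D b)) ->
  forall u v, idD (u * v) = idD u * v + u * idD v.
Proof.
move=> DM idD_lin idD_tens.
apply: (tens_ext2 (g1 := fun u v => idD (u * v))); first split.
- by move=> u a v w; rewrite mulrDr -scalerAr idD_lin.
- by move=> w a u v; rewrite mulrDl -scalerAl idD_lin.
- split=> [u a v w | w a u v]; rewrite idD_lin.
    by rewrite !mulrDr -!scalerAr scalerDr addrACA.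
  by rewrite !mulrDl -!scalerAl scalerDr addrACA.
by move=> a b a' b'; rewrite tensM !idD_tens !tensM DM (islinD (tens_linr _)).
Qed.

End TensorProduct.

Section LaurentProduct.
Variable T : pzRingType.
Implicit Types (f g : int -> T) (N M k : int).

(* [lmulB] as a match on the number of terms, convenient for index arithmetic. *)
Lemma lmulBE f g N M k :
  lmulB f g N M k =
  match N + M - k with
  | Posz n => \sum_(a < n.+1) f (N - (a : nat)%:Z) * g (M - (n - a)%:Z)
  | Negz _ => 0
  end.
Proof. by rewrite /lmulB; case: (N + M - k). Qed.

Lemma lbounded_le (V : zmodType) (h : int -> V) N N' :
  lbounded h N -> N <= N' -> lbounded h N'.
Proof. by move=> hN le k lt; apply: hN; lia. Qed.

Lemma lmulB_ext f f' g g' N M k :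
  f =1 f' -> g =1 g' -> lmulB f g N M k = lmulB f' g' N M k.
Proof.
by move=> ef eg; rewrite /lmulB; case: ifP => // _; apply: eq_bigr => i _; rewrite ef eg.
Qed.

Lemma lmulB_subl f f' g N M k :
  lmulB (fun i => f i - f' i) g N M k = lmulB f g N M k - lmulB f' g N M k.
Proof.
rewrite /lmulB; case: ifP => _; last by rewrite subr0.
by rewrite -sumrB; apply: eq_bigr => i _; rewrite mulrBl.
Qed.

Lemma lmulB_subr f g g' N M k :
  lmulB f (fun i => g i - g' i) N M k = lmulB f g N M k - lmulB f g' N M k.
Proof.
rewrite /lmulB; case: ifP => _; last by rewrite subr0.
by rewrite -sumrB; apply: eq_bigr => i _; rewrite mulrBr.
Qed.

Lemma lmulB_map (T' : pzRingType) (phi : T -> T') f g N M k :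
  phi 0 = 0 -> {morph phi : x y / x + y} -> {morph phi : x y / x * y} ->
  phi (lmulB f g N M k) = lmulB (phi \o f) (phi \o g) N M k.
Proof.
move=> phi0 phiD phiM; rewrite /lmulB; case: ifP => // _.
by rewrite (big_morph phi phiD phi0); apply: eq_bigr => i _; rewrite phiM.
Qed.

Lemma lmulB_der (phi : T -> T) f g N M k :
  phi 0 = 0 -> {morph phi : x y / x + y} ->
  (forall x y, phi (x * y) = phi x * y + x * phi y) ->
  phi (lmulB f g N M k) = lmulB (phi \o f) g N M k + lmulB f (phi \o g) N M k.
Proof.
move=> phi0 phiD phiM; rewrite /lmulB; case: ifP => _; last by rewrite phi0 addr0.
by rewrite (big_morph phi phiD phi0) -big_split; apply: eq_bigr => i _; rewrite phiM.
Qed.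

(* Leibniz rule for d/dw: the coefficient of w^k in (fg)' is that of f'g + fg'. *)
Lemma lmulB_deriv f g N M k :
  lbounded f N -> lbounded g M ->
  lmulB f g N M (k + 1) *~ (k + 1) =
  lmulB (fun i => f (i + 1) *~ (i + 1)) g N M k +
  lmulB f (fun i => g (i + 1) *~ (i + 1)) N M k.
Proof.
move=> hf hg; rewrite !lmulBE.
have -> : N + M - (k + 1) = (N + M - k) - 1 by lia.
case E: (N + M - k) => [[|n]|n]; last by rewrite addr0 /= mul0rz.
  rewrite !big_ord1 /= !subr0 ?subn0 hf ?mul0rz ?mul0r ?add0r; last by lia.
  by rewrite hg ?mul0rz ?mulr0 //; lia.
have -> : Posz n.+1 - 1 = Posz n by lia.
rewrite [X in _ = X + _]big_ord_recl [X in _ = _ + X]big_ord_recr /=.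
rewrite hf ?mul0r ?mulr0z ?add0r; last by lia.
rewrite (hg (M - (n.+1 - n.+1)%N%:Z + 1)) ?mul0rz ?mul0r ?mulr0 ?addr0 ?add0r;
  last by rewrite subnn; lia.
rewrite mulrz_suml -big_split /=; apply: eq_bigr => i _.
have hi := ltn_ord i.
rewrite mulrzAl mulrzAr /bump /= add1n.
have -> : N - (i.+1)%:Z + 1 = N - (i : nat)%:Z by lia.
have -> : M - (n.+1 - i.+1)%N%:Z = M - (n - i)%N%:Z by lia.
have -> : M - (n.+1 - i)%N%:Z + 1 = M - (n - i)%N%:Z by lia.
by rewrite -mulrzDr; congr (_ *~ _); lia.
Qed.

Section NonnegativeSeries.
Variables (p q : int -> T) (n m : nat).
Hypotheses (p_nneg : forall i, i < 0 -> p i = 0) (q_nneg : forall i, i < 0 -> q i = 0).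

Let vanishing_term (s a : nat) : (a <= s)%N ->
  (n%:Z - a%:Z < 0) \/ (m%:Z - (s - a)%N%:Z < 0) ->
  p (n%:Z - a%:Z) * q (m%:Z - (s - a)%N%:Z) = 0.
Proof. by move=> _ [h|h]; [rewrite p_nneg ?mul0r | rewrite q_nneg ?mulr0]. Qed.

Lemma lmulB_coef_neg k : k < 0 -> lmulB p q n m k = 0.
Proof.
move=> hk; rewrite lmulBE; case E: (_ + _ - _) => [s|//].
apply: big1 => a _; have ha := ltn_ord a.
by apply: vanishing_term; lia.
Qed.

Lemma lmulB_coef0 : lmulB p q n m 0 = p 0 * q 0.
Proof.
rewrite lmulBE; have -> : n%:Z + m%:Z - 0 = (n + m)%N by lia.
rewrite (bigD1 (Ordinal (leq_addr m n.+1 : n < (n + m).+1)%N)) //= big1 ?addr0.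
  by congr (p _ * q _); lia.
move=> a; rewrite -val_eqE /= => /eqP ne; have ha := ltn_ord a.
by apply: vanishing_term; lia.
Qed.

Lemma lmulB_coef1 : (1 <= n)%N -> (1 <= m)%N ->
  lmulB p q n m 1 = p 1 * q 0 + p 0 * q 1.
Proof.
move=> hn hm; rewrite lmulBE; have -> : n%:Z + m%:Z - 1 = (n + m - 1)%N by lia.
rewrite (eq_bigr (fun a : 'I_(n + m - 1).+1 =>
   (if (a : nat) == n.-1 then p 1 * q 0 else 0) +
   (if (a : nat) == n then p 0 * q 1 else 0))).
  rewrite big_split /= -!big_mkcond (big_ord1_eq _ (fun _ => p 1 * q 0)).
  by rewrite (big_ord1_eq _ (fun _ => p 0 * q 1)) !ifT //; lia.
move=> a _; have ha := ltn_ord a; case: eqP => e1; case: eqP => e2.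
- lia.
- by rewrite addr0; congr (p _ * q _); lia.
- by rewrite add0r; congr (p _ * q _); lia.
by rewrite addr0; apply: vanishing_term; lia.
Qed.

End NonnegativeSeries.

End LaurentProduct.

Section CoproductIdentities.
Variables (C : comPzRingType) (A T : algType C).
Variables (Y : A -> int -> T) (idc : T -> A).
Hypothesis Yhom : laurent_alg_hom Y.
Hypotheses (idc_lin : islin idc) (idc1 : idc 1 = 1).
Hypothesis idcM : forall u v, idc (u * v) = idc u * idc v.

Lemma Y_lin k : islin (Y^~ k).
Proof. by case: Yhom => _ Ylin _ _ a x y; apply: Ylin. Qed.

Lemma Y0 k : Y 0 k = 0.
Proof. exact: (islin0 (Y_lin k)). Qed.

Lemma YD x y k : Y (x + y) k = Y x k + Y y k.
Proof. exact: (islinD (Y_lin k)). Qed.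

Lemma YZ a x k : Y (a *: x) k = a *: Y x k.
Proof. exact: (islinZ (Y_lin k)). Qed.

Lemma Y_one k : Y 1 k = if k == 0 then 1 else 0.
Proof. by case: Yhom. Qed.

Lemma Y_mul x y N M k :
  lbounded (Y x) N -> lbounded (Y y) M -> Y (x * y) k = lmulB (Y x) (Y y) N M k.
Proof. by case: Yhom => _ _ _ YM bx by'; apply: YM bx by' k. Qed.

Lemma Y_common_bound x y :
  exists n : nat, [/\ (1 <= n)%N, lbounded (Y x) n & lbounded (Y y) n].
Proof.
case: Yhom => Ybd _ _ _; have [N bx] := Ybd x; have [M by'] := Ybd y.
exists (maxn (absz N) (absz M)).+1; split=> //.
  by apply: (lbounded_le bx); lia.
by apply: (lbounded_le by'); lia.
Qed.

Definition counital (x : A) : Prop :=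
  (forall k, k < 0 -> idc (Y x k) = 0) /\ idc (Y x 0) = x.

Lemma counital1 : counital 1.
Proof.
split=> [k k_neg|]; last by rewrite Y_one /= idc1.
by rewrite Y_one ifF ?islin0 //; apply/eqP; lia.
Qed.

Lemma counitalZ a x : counital x -> counital (a *: x).
Proof.
case=> negx constx.
split=> [k k_neg|]; rewrite YZ (islinZ idc_lin); first by rewrite negx ?scaler0.
by rewrite constx.
Qed.

Lemma counitalD x y : counital x -> counital y -> counital (x + y).
Proof.
case=> negx constx [negy consty].
split=> [k k_neg|]; rewrite YD (islinD idc_lin); first by rewrite negx ?negy ?addr0.
by rewrite constx consty.
Qed.

Lemma counitalM x y : counital x -> counital y -> counital (x * y).
Proof.
case=> negx constx [negy consty]; have [n [_ bx by']] := Y_common_bound x y.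
have coef k : idc (Y (x * y) k) = lmulB (idc \o Y x) (idc \o Y y) n n k.
  by rewrite (Y_mul _ bx by') lmulB_map //; [exact: islin0 | exact: islinD].
split=> [k k_neg|]; first by rewrite coef lmulB_coef_neg.
by rewrite coef lmulB_coef0 //= constx consty.
Qed.

Notation D := (Dstar idc Y).

Lemma Dstar_lin : islin D.
Proof. by move=> a x y; rewrite /Dstar (Y_lin 1) idc_lin. Qed.

Lemma Dstar1 : D 1 = 0.
Proof. by rewrite /Dstar Y_one /= islin0. Qed.

(* On counital elements Dstar obeys the Leibniz rule: the coefficient of w^1 of
   a product of two polynomials with constant terms x and y. *)
Lemma Dstar_mul x y : counital x -> counital y -> D (x * y) = D x * y + x * D y.
Proof.
case=> negx constx [negy consty]; have [n [n_pos bx by']] := Y_common_bound x y.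
rewrite /Dstar (Y_mul _ bx by') lmulB_map //; last 2 first.
- exact: islin0.
- exact: islinD.
by rewrite lmulB_coef1 //= constx consty.
Qed.

Variable idD : T -> T.
Hypothesis idD_lin : islin idD.
Hypothesis idD_der : forall u v, idD (u * v) = idD u * v + u * idD v.

(* The differential equation d/dw Y(w) x = Y(w) Dstar x - (Id (x) Dstar) Y(w) x,
   read on the coefficient of w^k. *)
Definition deriv_identity (x : A) : Prop :=
  forall k, (k + 1)%:~R *: Y x (k + 1) = Y (D x) k - idD (Y x k).

Lemma deriv_identity1 : deriv_identity 1.
Proof.
move=> k; rewrite Dstar1 Y0.
rewrite !Y_one (islin_if idD_lin) (derivation1 idD_der) if_same subrr.
by case: eqP => [->|_]; rewrite ?scale0r ?scaler0.
Qed.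

Lemma deriv_identityZ a x : deriv_identity x -> deriv_identity (a *: x).
Proof.
move=> hx k; rewrite islinZ; last exact: Dstar_lin.
rewrite !YZ (islinZ idD_lin) -scalerBr -hx !scalerA.
by rewrite mulrC.
Qed.

Lemma deriv_identityD x y :
  deriv_identity x -> deriv_identity y -> deriv_identity (x + y).
Proof.
move=> hx hy k; rewrite islinD; last exact: Dstar_lin.
rewrite !YD (islinD idD_lin) scalerDr hx hy.
by rewrite opprD addrACA.
Qed.

(* Closure under products, by the Leibniz rules for d/dw, for Dstar and for
   Id (x) Dstar. *)
Lemma deriv_identityM x y : counital x -> counital y ->
  deriv_identity x -> deriv_identity y -> deriv_identity (x * y).
Proof.
move=> cx cy hx hy k.
have [n [_ bx bDx]] := Y_common_bound x (D x).
have [m [_ by' bDy]] := Y_common_bound y (D y).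
rewrite scaler_int (Y_mul _ bx by') lmulB_deriv //.
have ex i : Y x (i + 1) *~ (i + 1) = Y (D x) i - idD (Y x i).
  by rewrite -scaler_int hx.
have ey i : Y y (i + 1) *~ (i + 1) = Y (D y) i - idD (Y y i).
  by rewrite -scaler_int hy.
rewrite (lmulB_ext _ _ _ ex (frefl (Y y))) (lmulB_ext _ _ _ (frefl (Y x)) ey).
rewrite lmulB_subl lmulB_subr Dstar_mul // YD.
rewrite (Y_mul _ bDx by') (Y_mul _ bx bDy) (Y_mul _ bx by').
rewrite (lmulB_der (phi := idD)) //.
- by rewrite opprD addrACA.
- exact: islin0.
- exact: islinD.
Qed.

End CoproductIdentities.

(* A derivation of A killing t_{2,0} and acting as d/dw on the t_{0,n} acts as
   d/dw on every t_{a,b}, because ad(t_{2,0}) raises the first index. *)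
Section DerivationOnGenerators.
Variables (C : numFieldType) (A : algType C) (t : nat -> nat -> A) (D : A -> A).
Hypothesis t20_comm :
  forall a b, comm (t 2%N 0%N) (t a b) = (2 * b)%:R *: t a.+1 b.-1.
Hypotheses (D_lin : islin D) (D_der : forall x y, D (x * y) = D x * y + x * D y).
Hypothesis D_t20 : D (t 2%N 0%N) = 0.
Hypothesis D_t0n : forall n, D (t 0%N n) = n%:R *: t 0%N n.-1.

Lemma t_succ a b : t a.+1 b = ((2 * b.+1)%:R)^-1 *: comm (t 2%N 0%N) (t a b.+1).
Proof. by rewrite t20_comm /= scalerA mulVf ?scale1r // pnatr_eq0. Qed.

Lemma derivation_t a b : D (t a b) = b%:R *: t a b.-1.
Proof.
elim: a b => [|a IH] b; first exact: D_t0n.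
rewrite t_succ (islinZ D_lin) /comm (islinB D_lin) !D_der D_t20 IH.
rewrite mul0r add0r mulr0 addr0 -scalerAr -scalerAl -scalerBr.
rewrite -/(comm (t 2%N 0%N) (t a b)) t20_comm !scalerA; congr (_ *: _).
rewrite !natrM; field.
by rewrite addrC natr1 pnatr_eq0.
Qed.

End DerivationOnGenerators.

Lemma if_cond (X : Type) (b' b : bool) (x y : X) :
  b = b' -> (if b then x else y) = (if b' then x else y).
Proof. by move=> ->. Qed.

Definition t20_coef (C : numFieldType) (m n : nat) : C :=
  (m + n + 1)`!%:R / ((m`!)%:R * (n`!)%:R) * (-1) ^+ n.

Lemma t20_coef_succ (C : numFieldType) (m n : nat) :
  m.+1%:R * t20_coef C m.+1 n = (m + n + 2)%:R * t20_coef C m n.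
Proof.
rewrite /t20_coef.
have -> : (m.+1 + n + 1 = (m + n + 1).+1)%N by lia.
have fm : (m`!)%:R != 0 :> C by rewrite pnatr_eq0 -lt0n fact_gt0.
have fn : (n`!)%:R != 0 :> C by rewrite pnatr_eq0 -lt0n fact_gt0.
have -> : (m + n + 2 = (m + n + 1).+1)%N by lia.
by rewrite !factS !natrM; field; rewrite fn fm addrC natr1 pnatr_eq0.
Qed.

Section GeneratorFormulas.
Variables (C : numFieldType) (A T : algType C) (t : nat -> nat -> A) (c : A -> C).
Variables (tens : A -> A -> T) (Y : A -> int -> T) (idc : T -> A) (idD : T -> T).
Variable s3 : C.
Hypothesis tens_lin : forall a, islin (tens a).
Hypotheses (c1 : c 1 = 1) (c_t : forall a b, c (t a b) = 0).
Hypotheses (idc_lin : islin idc) (idc_tens : forall a b, idc (tens a b) = c b *: a).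
Hypothesis Yhom : laurent_alg_hom Y.
Hypothesis Y_t0n : forall (n : nat) (k : int),
  Y (t 0%N n) k =
    (if k == 0 then tens 1 (t 0%N n) else 0)
    + (if (0 <= k) && (k <= n%:Z)
       then 'C(n, n - absz k)%:R *: tens (t 0%N (n - absz k)%N) 1 else 0).
Hypothesis Y_t20 : forall k : int,
  Y (t 2%N 0%N) k =
    (if k == 0 then tens 1 (t 2%N 0%N) + tens (t 2%N 0%N) 1 else 0)
    + (2%:R * s3) *:
        \sum_(m < (absz k).+1) \sum_(n < (absz k).+1)
          (if (m + n + 2)%N%:Z + k == 0
           then t20_coef C m n *: tens (t 0%N n) (t 0%N m) else 0).
Hypothesis idD_lin : islin idD.
Hypothesis idD_tens : forall a b, idD (tens a b) = tens a (Dstar idc Y b).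

Lemma idcY_t20 k : idc (Y (t 2%N 0%N) k) = if k == 0 then t 2%N 0%N else 0.
Proof.
rewrite Y_t20 !(islinD idc_lin) (islin_if idc_lin) (islinD idc_lin) !idc_tens c_t c1.
rewrite scale0r add0r scale1r (islinZ idc_lin) (islin_sum idc_lin).
rewrite big1 ?scaler0 ?addr0 //.
move=> m _; rewrite (islin_sum idc_lin) big1 // => n _.
by rewrite (islin_if idc_lin) (islinZ idc_lin) idc_tens c_t scale0r scaler0 if_same.
Qed.

Lemma idcY_t0n n k : idc (Y (t 0%N n) k) =
  if (0 <= k) && (k <= n%:Z) then 'C(n, n - absz k)%:R *: t 0%N (n - absz k)%N else 0.
Proof.
rewrite Y_t0n (islinD idc_lin) !(islin_if idc_lin) (islinZ idc_lin) !idc_tens c_t c1.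
by rewrite scale0r scale1r if_same add0r.
Qed.

Lemma counital_t20 : counital Y idc (t 2%N 0%N).
Proof. by split=> [k k_neg|]; rewrite idcY_t20 // ifF //; apply/eqP; lia. Qed.

Lemma counital_t0n n : counital Y idc (t 0%N n).
Proof.
split=> [k k_neg|]; first by rewrite idcY_t0n ifF //; lia.
by rewrite idcY_t0n /= subn0 binn scale1r.
Qed.

Lemma Dstar_t20 : Dstar idc Y (t 2%N 0%N) = 0.
Proof. by rewrite /Dstar idcY_t20. Qed.

Lemma Dstar_t0n n : Dstar idc Y (t 0%N n) = n%:R *: t 0%N n.-1.
Proof.
rewrite /Dstar idcY_t0n; case: n => [|n] /=; first by rewrite scale0r.
by rewrite subn1 /= binSn.
Qed.

Lemma deriv_identity_t0n n : deriv_identity Y idc idD (t 0%N n).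
Proof.
move=> k; rewrite Dstar_t0n YZ // !Y_t0n (islinD idD_lin) !(islin_if idD_lin).
rewrite (islinZ idD_lin) !idD_tens (Dstar1 Yhom idc_lin) Dstar_t0n islin0 // scaler0.
rewrite if_same addr0 (islinZ (tens_lin 1)) [in RHS]scalerDr.
rewrite [n%:R *: (if k == 0 then _ else _)]fun_if scaler0 addrAC subrr add0r.
case: k => [j|[|K]].
- have -> : Posz j + 1 = Posz j.+1 by lia.
  rewrite add0r; case: n => [|n].
    by rewrite scale0r (_ : (0 <= Posz j.+1 <= Posz 0) = false) // scaler0.
  rewrite (@if_cond _ (j <= n)%N) // (@if_cond _ (j <= n)%N) //.
  case: leqP => le_jn; last by rewrite !scaler0.
  rewrite subSS !scalerA; congr (_ *: _).
  rewrite -[(Posz j.+1)%:~R]/(j.+1%:R) -!natrM (bin_sub le_jn) -subSS.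
  by rewrite (@bin_sub n.+1 j.+1) // mul_bin_diag mulnC.
- by rewrite scale0r (_ : (0 <= Negz 0) && _ = false) // scaler0.
have -> : Negz K.+1 + 1 = Negz K by rewrite !NegzE; lia.
by rewrite (_ : (0 <= Negz K) && _ = false) // addr0 !scaler0.
Qed.

(* Id (x) Dstar only sees the second tensor factor t_{0,m} of Y(w) t_{2,0}. *)
Lemma idD_Y_t20 k :
  idD (Y (t 2%N 0%N) k) =
  (2%:R * s3) *:
    \sum_(m < (absz k).+1) \sum_(n < (absz k).+1)
      (if (m + n + 2)%N%:Z + k == 0
       then t20_coef C m n *: tens (t 0%N n) (m%:R *: t 0%N m.-1) else 0).
Proof.
rewrite Y_t20 (islinD idD_lin) (islin_if idD_lin) (islinD idD_lin) !idD_tens.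
rewrite Dstar_t20 (Dstar1 Yhom idc_lin) !(islin0 (tens_lin _)) addr0 if_same add0r.
rewrite (islinZ idD_lin) (islin_sum idD_lin); congr (_ *: _); apply: eq_bigr => m _.
rewrite (islin_sum idD_lin); apply: eq_bigr => n _.
by rewrite (islin_if idD_lin) (islinZ idD_lin) idD_tens Dstar_t0n.
Qed.

(* The coefficient of w^{-K-1} of the derivative of the t_{0,n} (x) t_{0,m}
   part of Y(w) t_{2,0}, after reindexing m -> m + 1. *)
Lemma t20_sum_shift (K : nat) :
  K.+1%:R *:
    \sum_(m < K.+2) \sum_(n < K.+2)
      (if (m + n + 2)%N%:Z + Negz K == 0
       then t20_coef C m n *: tens (t 0%N n) (t 0%N m) else 0) =
  \sum_(m < K.+3) \sum_(n < K.+3)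
    (if (m + n + 2)%N%:Z + Negz K.+1 == 0
     then t20_coef C m n *: tens (t 0%N n) (m%:R *: t 0%N m.-1) else 0).
Proof.
rewrite [RHS]big_ord_recl [in RHS]big1 ?add0r; last first.
  by move=> n _; rewrite /= scale0r (islin0 (tens_lin _)) scaler0 if_same.
rewrite scaler_sumr; apply: eq_bigr => m _; rewrite scaler_sumr [RHS]big_ord_recr /=.
rewrite [X in _ = _ + X](@if_cond _ false) ?addr0; last first.
  by apply/eqP => h; have : (m.+1 + K.+2 + 2)%N%:Z - K.+2%:Z = 0 := h; lia.
apply: eq_bigr => n _; rewrite (@if_cond _ (m + n + 1 == K)%N); last first.
  by apply/eqP/eqP => h; [have : (m + n + 2)%N%:Z - K.+1%:Z = 0 := h | 
                          change ((m + n + 2)%N%:Z - K.+1%:Z = 0)]; lia.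
rewrite [RHS](@if_cond _ (m + n + 1 == K)%N); last first.
  by apply/eqP/eqP => h; [have : (m.+1 + n + 2)%N%:Z - K.+2%:Z = 0 := h |
                          change ((m.+1 + n + 2)%N%:Z - K.+2%:Z = 0)]; lia.
case: eqP => [mnK|_]; last by rewrite scaler0.
rewrite /bump /= add1n (islinZ (tens_lin _)) !scalerA; congr (_ *: _).
by rewrite [RHS]mulrC t20_coef_succ; congr (_%:R * _); lia.
Qed.

Lemma deriv_identity_t20 : deriv_identity Y idc idD (t 2%N 0%N).
Proof.
move=> k; rewrite Dstar_t20 Y0 // sub0r Y_t20 idD_Y_t20.
case: k => [j|[|K]].
- have -> : Posz j + 1 = Posz j.+1 by lia.
  rewrite add0r !big1 ?scaler0 ?oppr0 // => m _; apply: big1 => n _;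
    by rewrite ifF //; apply/eqP; lia.
- rewrite scale0r big1 ?scaler0 ?oppr0 // => m _; apply: big1 => n _.
  by rewrite ifF //; apply/eqP => h; have : (m + n + 2)%N%:Z - 1 = 0 := h; lia.
have -> : Negz K.+1 + 1 = Negz K by rewrite !NegzE; lia.
rewrite add0r -[(Negz K)%:~R]/(- K.+1%:R) scaleNr; congr (- _).
by rewrite scalerA mulrC -[LHS]scalerA t20_sum_shift.
Qed.

(* Since A is generated by t_{2,0} and the t_{0,n}, the generic closure
   properties propagate everything from the generators to all of A. *)
Hypothesis gen : forall x, gen_by t x.
Hypotheses (idc1 : idc 1 = 1) (idcM : forall u v, idc (u * v) = idc u * idc v).

Lemma counital_all x : counital Y idc x.
Proof.
elim: (gen x) => [|n||a y _ cy|y z _ cy _ cz|y z _ cy _ cz].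
- exact: counital_t20.
- exact: counital_t0n.
- exact: counital1.
- exact: counitalZ.
- exact: counitalD.
- exact: counitalM.
Qed.

Lemma Dstar_der x y : Dstar idc Y (x * y) = Dstar idc Y x * y + x * Dstar idc Y y.
Proof. exact (Dstar_mul Yhom idc_lin idcM (counital_all x) (counital_all y)). Qed.

Lemma Dstar_t :
  (forall a b, comm (t 2%N 0%N) (t a b) = (2 * b)%:R *: t a.+1 b.-1) ->
  forall a b, Dstar idc Y (t a b) = b%:R *: t a b.-1.
Proof.
move=> t20_comm; apply: derivation_t t20_comm (Dstar_lin Yhom idc_lin) Dstar_der _ _.
  exact: Dstar_t20.
exact: Dstar_t0n.
Qed.

Lemma deriv_identity_all :
  (forall u v, idD (u * v) = idD u * v + u * idD v) ->
  forall v, deriv_identity Y idc idD v.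
Proof.
move=> idD_der v; elim: (gen v) => [|n||a y _ hy|y z _ hy _ hz|y z _ hy _ hz].
- exact: deriv_identity_t20.
- exact: deriv_identity_t0n.
- exact: deriv_identity1.
- exact: deriv_identityZ.
- exact: deriv_identityD.
- exact: deriv_identityM (counital_all y) (counital_all z) hy hz.
Qed.

End GeneratorFormulas.

Unset Implicit Arguments. Set Strict Implicit. Set Printing Implicit Defensive.
Local Open Scope complex_scope.

Theorem mainTheorem2 (R : realType) (e1 e2 e3 : R[i])
  (A : algType R[i]) (t : nat -> nat -> A) (c : A -> R[i])
  (T : algType R[i]) (tens : A -> A -> T) (Y : A -> int -> T)
  (idc : T -> A) (idD : T -> T) :
  (* parameters: sigma_2, sigma_3 *)
  e1 + e2 + e3 = 0 ->
  (* the algebra A = U_{e1}(gl_1 (x) Diff_{e2}(C)) *)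
  UDiff_rels (e1 ^+ 2 + e1 * e2 + e2 ^+ 2) (e1 * e2 * e3) t ->
  (forall x : A, gen_by t x) ->
  (* the augmentation c *)
  islin c -> (forall x y, c (x * y) = c x * c y) -> c 1 = 1 ->
  (forall a b, c (t a b) = 0) ->
  (* T = A (x) A as an algebra *)
  is_tensor tens ->
  (forall a b a' b', tens a b * tens a' b' = tens (a * a') (b * b')) ->
  tens 1 1 = 1 ->
  (* Y(w) : A -> (A (x) A)((w^{-1})), Y x k = coefficient of w^k *)
  laurent_alg_hom Y ->
  (forall (n : nat) (k : int),
     Y (t 0%N n) k =
       (if k == 0 then tens 1 (t 0%N n) else 0)
       + (if (0 <= k) && (k <= n%:Z)
          then 'C(n, n - absz k)%:R *: tens (t 0%N (n - absz k)%N) 1 else 0)) ->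
  (forall k : int,
     Y (t 2%N 0%N) k =
       (if k == 0 then tens 1 (t 2%N 0%N) + tens (t 2%N 0%N) 1 else 0)
       + (2%:R * (e1 * e2 * e3)) *:
           \sum_(m < (absz k).+1) \sum_(n < (absz k).+1)
             (if (m + n + 2)%N%:Z + k == 0
              then ((m + n + 1)`!%:R / ((m`!)%:R * (n`!)%:R) * (-1) ^+ n)
                     *: tens (t 0%N n) (t 0%N m)
              else 0)) ->
  (* Id (x) c *)
  islin idc -> (forall a b, idc (tens a b) = c b *: a) ->
  (* Id (x) Dstar *)
  islin idD -> (forall a b, idD (tens a b) = tens a (Dstar idc Y b)) ->
  [/\ islin (Dstar idc Y),
      (forall x y, Dstar idc Y (x * y) = Dstar idc Y x * y + x * Dstar idc Y y),
      (forall a b : nat, Dstar idc Y (t a b) = b%:R *: t a b.-1) &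
      (* d/dw Y(w) = Y(w) Dstar - (Id (x) Dstar) Y(w), coefficientwise *)
      (forall (v : A) (k : int),
         (k + 1)%:~R *: Y v (k + 1) = Y (Dstar idc Y v) k - idD (Y v k))].
Proof.
move=> _ rels gen _ cM c1 c_t tensU tensM tens11 Yhom Y_t0n Y_t20
  idc_lin idc_tens idD_lin idD_tens.
have tens_lin := tens_linr tensU.
have idc1 : idc 1 = 1 by rewrite -tens11 idc_tens c1 scale1r.
have idcM := idc_mul tensU tensM cM idc_lin idc_tens.
have DM := Dstar_der c1 c_t idc_lin idc_tens Yhom Y_t0n Y_t20 gen idc1 idcM.
have t20_comm a b : comm (t 2%N 0%N) (t a b) = (2 * b)%:R *: t a.+1 b.-1.
  by have [[_ _ _ ->] _] := rels a b.
split.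
- exact: Dstar_lin.
- exact: DM.
- exact: Dstar_t c1 c_t idc_lin idc_tens Yhom Y_t0n Y_t20 gen idc1 idcM t20_comm.
- exact: deriv_identity_all tens_lin c1 c_t idc_lin idc_tens Yhom Y_t0n Y_t20
    idD_lin idD_tens gen idc1 idcM (idD_mul tensU tensM DM idD_lin idD_tens).
Qed.
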